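(* In the click-through auction setting with $n\ge 2$ bidders, suppose the environment is symmetric, i.e. the random variables $v_1r_1,\dots,v_nr_n$ (with $r\sim G$, $G$ of finite support) are exchangeable. Then for every $\varepsilon>0$ there exists a calibrated (correlated) information structure whose revenue is at least $\mathbb{E}[\max_i v_ir_i]-\varepsilon$.
   Context: Setting. There are $n\ge 2$ bidders; bidder $i$ has a known value per click $v_i\ge 0$. A vector of click-through rates (CTRs) $r=(r_1,\dots,r_n)\in[0,1]^n$ is drawn from a prior distribution $G$ with finite support (mass function $g$). An information structure is a probability distribution $x$ with finite support on pairs $(r,s)\in[0,1]^n\times[0,1]^n$ with $\sum_s x(r,s)=g(r)$ for all $r$. Given signals $s$, the winner $i^*$ is a bidder maximizing $v_is_i$, ties broken uniformly at random; the price per click is $p_{i^*}=\max_{j\neq i^*}v_js_j/s_{i^*}$ (revenue $0$ if $s_{i^*}=0$), paid only upon a click, which occurs with probability $r_{i^*}$. Revenue is $\mathbb{E}[r_{i^*}p_{i^*}]$. Calibrated: $\mathbb{E}[r_i\mid s_i=t]=t$ for every $i$ and every $t$ with $\Pr[s_i=t]>0$. Independent: $\mathbb{E}[r_i\mid s]=\mathbb{E}[r_i\mid s_i]$ for all $i$ and all $s$ in the support; correlated means not independent. The quantity $\mathbb{E}[\max_iv_ir_i]$ is the (full) social surplus. *)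

From HB Require Import structures.
From mathcomp Require Import all_boot all_order all_algebra all_fingroup.
From mathcomp Require Import reals.
Set Implicit Arguments. Unset Strict Implicit. Unset Printing Implicit Defensive.
Import Order.TTheory GRing.Theory Num.Theory.
Local Open Scope ring_scope.

Definition vecR (R : realType) (n : nat) := {ffun 'I_n -> R}.

(* A finitely supported distribution is a list of (point, weight) pairs;
   the mass of a point is the total weight of its entries. *)
Definition prior (R : realType) (n : nat) := seq (vecR R n * R).
Definition infostruct (R : realType) (n : nat) := seq ((vecR R n * vecR R n) * R).

Definition in01 (R : realType) (n : nat) (r : vecR R n) : bool :=
  [forall i, (0 <= r i) && (r i <= 1)].

Definition is_prior (R : realType) (n : nat) (G : prior R n) : Prop :=
  all (fun p => (0 <= p.2) && in01 p.1) G /\ \sum_(p <- G) p.2 = 1.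

Definition gmass (R : realType) (n : nat) (G : prior R n) (r : vecR R n) : R :=
  \sum_(p <- G | p.1 == r) p.2.

Definition is_info_structure (R : realType) (n : nat) (G : prior R n)
    (x : infostruct R n) : Prop :=
  all (fun q => [&& 0 <= q.2, in01 q.1.1 & in01 q.1.2]) x /\
  forall r : vecR R n, \sum_(q <- x | q.1.1 == r) q.2 = gmass G r.

Definition top_score (R : realType) (n : nat) (v : 'I_n -> R) (s : vecR R n) : R :=
  \big[Num.max/0]_(j : 'I_n) (v j * s j).

Definition winners (R : realType) (n : nat) (v : 'I_n -> R) (s : vecR R n) : {set 'I_n} :=
  [set i | v i * s i == top_score v s].

Definition price (R : realType) (n : nat) (v : 'I_n -> R) (s : vecR R n) (i : 'I_n) : R :=
  if s i == 0 then 0 else (\big[Num.max/0]_(j | j != i) (v j * s j)) / s i.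

Definition rev_at (R : realType) (n : nat) (v : 'I_n -> R) (r s : vecR R n) : R :=
  (#|winners v s|%:R)^-1 * \sum_(i in winners v s) r i * price v s i.

Definition revenue (R : realType) (n : nat) (v : 'I_n -> R) (x : infostruct R n) : R :=
  \sum_(q <- x) q.2 * rev_at v q.1.1 q.1.2.

Definition surplus (R : realType) (n : nat) (v : 'I_n -> R) (G : prior R n) : R :=
  \sum_(p <- G) p.2 * \big[Num.max/0]_(i : 'I_n) (v i * p.1 i).

Definition calibrated (R : realType) (n : nat) (x : infostruct R n) : Prop :=
  forall (i : 'I_n) (t : R),
    0 < \sum_(q <- x | q.1.2 i == t) q.2 ->
    (\sum_(q <- x | q.1.2 i == t) q.2 * q.1.1 i) / (\sum_(q <- x | q.1.2 i == t) q.2) = t.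

(* symmetric environment: (v_1 r_1, ..., v_n r_n) with r ~ G is exchangeable,
   i.e. its law is invariant under every permutation of the coordinates *)
Definition symmetric_env (R : realType) (n : nat) (v : 'I_n -> R) (G : prior R n) : Prop :=
  forall (sigma : {perm 'I_n}) (w : vecR R n),
    \sum_(p <- G | [ffun i => v i * p.1 i] == w) p.2 =
    \sum_(p <- G | [ffun i => v (sigma i) * p.1 (sigma i)] == w) p.2.

From HB Require Import structures.
From mathcomp Require Import all_boot all_order all_algebra all_fingroup.
From mathcomp Require Import reals zify ring lra.
Set Implicit Arguments. Unset Strict Implicit. Unset Printing Implicit Defensive.
Import Order.TTheory GRing.Theory Num.Theory.
Local Open Scope ring_scope.

(* Let S = E[max_i v_i r_i] be the surplus and mu = E[v_j r_j] the mean score,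
   which does not depend on j by exchangeability.  If S <= mu, all scores
   coincide almost surely and revealing r itself extracts the full surplus.
   Otherwise, for K levels with weights a_k proportional to K+1-k, we draw a
   level k ~ a and a top bidder i (uniformly among the maximizers of v_j r_j);
   bidder j receives the label k+1 if j = i and k otherwise, and his signal is
   E[r_j | label].  This signal is calibrated by construction, and by symmetry
   v_j s_j depends on the label only, through an explicit ratio m_l which
   strictly increases in l by log-concavity of a.  Hence the designated top
   bidder wins and pays m_k / m_{k+1} of his score, so the revenue is
   S * sum_k a_k m_k / m_{k+1}; telescoping bounds the loss by
   2 S^2 / (mu (K+1)), which is below any eps for K large. *)

Section LabelledSums.
Variables (R : realType) (T L : eqType).

Lemma sum_by_label (s : seq T) (lab : T -> L) (P : pred T) (F : T -> R) :
  \sum_(t <- s | P t) F t =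
  \sum_(l <- undup (map lab s)) \sum_(t <- s | P t && (lab t == l)) F t.
Proof.
rewrite -(exchange_big_dep xpredT) //= big_seq_cond [RHS]big_seq_cond.
apply: eq_bigr => t /andP[t_s _]; rewrite -big_filter.
have -> : [seq l <- undup (map lab s) | lab t == l] = [:: lab t].
  rewrite (@eq_filter _ _ (pred1 (lab t))) => [|l]; last by rewrite /= eq_sym.
  by rewrite filter_pred1_uniq ?undup_uniq // mem_undup map_f.
by rewrite big_seq1.
Qed.

(* Different labels may share a signal value, which
   is why the level set is split by labels first. *)
Lemma mean_signal_calibrated (s : seq T) (w val : T -> R) (lab : T -> L) (c : R) :
  let mass l := \sum_(t <- s | lab t == l) w t in
  let moment l := \sum_(t <- s | lab t == l) w t * val t in
  (forall l, mass l = 0 -> moment l = 0) ->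
  \sum_(t <- s | moment (lab t) / mass (lab t) == c) w t * val t =
  c * \sum_(t <- s | moment (lab t) / mass (lab t) == c) w t.
Proof.
move=> mass moment moment0; rewrite !(sum_by_label _ lab) mulr_sumr.
apply: eq_bigr => l _.
have restrict (F : T -> R) :
    \sum_(t <- s | (moment (lab t) / mass (lab t) == c) && (lab t == l)) F t =
    if moment l / mass l == c then \sum_(t <- s | lab t == l) F t else 0.
  case: ifP => [hc|hc]; last by apply: big1 => t /andP[+ /eqP lt_l]; rewrite lt_l hc.
  by apply: eq_bigl => t; case: (lab t =P l) => [->|_]; rewrite ?hc ?andbF.
rewrite !restrict; case: eqP => [<-|_]; last by rewrite /= mulr0.
rewrite -/(mass l) -/(moment l); have [mass0|mass_neq0] := eqVneq (mass l) 0.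
  by rewrite mass0 moment0 // mulr0.
by rewrite divfK.
Qed.

Lemma sum_pushforward (I : eqType) (s : seq I) (w : I -> R) (h : I -> T)
    (F : T -> R) (U : seq T) :
  uniq U -> {in s, forall p, h p \in U} ->
  \sum_(p <- s) w p * F (h p) = \sum_(u <- U) F u * \sum_(p <- s | h p == u) w p.
Proof.
move=> uniqU hU; under [RHS]eq_bigr do rewrite mulr_sumr.
rewrite (exchange_big_dep xpredT) //= big_seq [RHS]big_seq.
apply: eq_bigr => p p_s; rewrite -big_filter.
have -> : [seq u <- U | h p == u] = [:: h p].
  rewrite (@eq_filter _ _ (pred1 (h p))) => [|u]; last by rewrite /= eq_sym.
  by rewrite filter_pred1_uniq // hU.
by rewrite big_seq1 mulrC.
Qed.

End LabelledSums.

Definition scores (R : realType) n (v : 'I_n -> R) (r : vecR R n) : vecR R n :=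
  [ffun i => v i * r i].
Definition top (R : realType) n (u : vecR R n) : R := \big[Num.max/0]_j u j.
Definition argmaxes (R : realType) n (u : vecR R n) : {set 'I_n} :=
  [set i | u i == top u].
Definition tie_share (R : realType) n (u : vecR R n) (j : 'I_n) : R :=
  if j \in argmaxes u then #|argmaxes u|%:R^-1 else 0.
Definition permv (R : realType) n (s : {perm 'I_n}) (u : vecR R n) : vecR R n :=
  [ffun i => u (s i)].

Section ScoreVectors.
Variables (R : realType) (n : nat).
Implicit Types (u : vecR R n).

Lemma top_scores (v : 'I_n -> R) (r : vecR R n) :
  top (scores v r) = \big[Num.max/0]_i (v i * r i).
Proof. by apply: eq_bigr => i _; rewrite ffunE. Qed.

Lemma top_ge0 u : 0 <= top u.
Proof. exact: bigmax_ge_id. Qed.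

Lemma top_ge u j : u j <= top u.
Proof. exact: le_bigmax. Qed.

Lemma top_le_sum u : (forall j, 0 <= u j) -> top u <= \sum_j u j.
Proof.
move=> u_ge0; apply: bigmax_le => [|j _]; first exact: sumr_ge0.
by rewrite (bigD1 j) //= lerDl sumr_ge0.
Qed.

Lemma tie_share_perm s u j : tie_share (permv s u) j = tie_share u (s j).
Proof.
have top_perm : top (permv s u) = top u.
  by rewrite /top [RHS](reindex_inj (@perm_inj _ s)); apply: eq_bigr => i _; rewrite ffunE.
have argmaxes_perm : argmaxes (permv s u) = s @^-1: argmaxes u.
  by apply/setP => i; rewrite !inE top_perm ffunE.
by rewrite /tie_share argmaxes_perm card_preimset ?inE //; exact: perm_inj.
Qed.

Section Nonnegative.
Variable u : vecR R n.
Hypotheses (u_ge0 : forall j, 0 <= u j) (n_gt0 : (0 < n)%N).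

Lemma argmaxes_gt0 : (0 < #|argmaxes u|)%N.
Proof.
apply/card_gt0P; pose j0 : 'I_n := Ordinal n_gt0.
by exists [arg max_(i > j0) u i]%O; rewrite inE /top (bigmax_eq_arg 0 j0).
Qed.

Lemma sum_tie_share : \sum_j tie_share u j = 1.
Proof.
rewrite /tie_share -big_mkcond /= sumr_const -[_ *+ _]mulr_natr mulVf //.
by rewrite pnatr_eq0 -lt0n argmaxes_gt0.
Qed.

Lemma sum_tie_share_score : \sum_j u j * tie_share u j = top u.
Proof.
rewrite /tie_share (eq_bigr (fun j => if j \in argmaxes u then top u / #|argmaxes u|%:R else 0)).
  rewrite -big_mkcond /= sumr_const -[_ *+ _]mulr_natr divfK //.
  by rewrite pnatr_eq0 -lt0n argmaxes_gt0.
by move=> j _; case: ifP => [|_]; rewrite ?mulr0 // inE => /eqP ->.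
Qed.

End Nonnegative.

End ScoreVectors.

Section AuctionOutcomes.
Variables (R : realType) (n : nat) (v : 'I_n -> R).
Hypothesis n_gt1 : (1 < n)%N.

Lemma exists_other (i : 'I_n) : exists j : 'I_n, j != i.
Proof.
have n_gt0 : (0 < n)%N by exact: ltnW.
case: (eqVneq i (Ordinal n_gt0)) => [->|ne]; last by exists (Ordinal n_gt0); rewrite eq_sym.
by exists (Ordinal n_gt1).
Qed.

Lemma max_others_const (F : 'I_n -> R) (i : 'I_n) (c : R) :
  0 <= c -> (forall j, j != i -> F j = c) -> \big[Num.max/0]_(j | j != i) F j = c.
Proof.
move=> c_ge0 Fc; have [j ji] := exists_other i.
apply/le_anti/andP; split; first by apply: bigmax_le => // k /Fc ->.
by apply: (bigmax_sup j) => //; rewrite Fc.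
Qed.

Lemma rev_at_unique_winner (r s : vecR R n) (i : 'I_n) (lo hi : R) :
  0 <= lo -> lo < hi -> (forall j, v j * s j = if j == i then hi else lo) ->
  rev_at v r s = v i * r i * lo / hi.
Proof.
move=> lo_ge0 lo_hi score.
have hi_gt0 : 0 < hi by exact: le_lt_trans lo_hi.
have top_hi : top_score v s = hi.
  apply/le_anti/andP; split.
    apply: bigmax_le => [|j _]; first exact: ltW.
    by rewrite score; case: ifP => // _; exact: ltW.
  by have := le_bigmax 0 (fun j => v j * s j) i; rewrite score eqxx.
have winner_i : winners v s = [set i].
  apply/setP => j; rewrite !inE score top_hi.
  by case: (j =P i) => _; rewrite ?eqxx ?(lt_eqF lo_hi).
have score_i := score i; rewrite eqxx in score_i.
have si_neq0 : s i != 0 by apply: contraTneq hi_gt0 => si0; rewrite -score_i si0 mulr0 ltxx.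
rewrite /rev_at winner_i cards1 invr1 mul1r big_set1 /price (negbTE si_neq0).
rewrite (max_others_const (c := lo)) //; last by move=> j /negbTE ji; rewrite score ji.
rewrite -score_i; field; apply/andP; split => //.
by apply: contraTneq hi_gt0 => vi0; rewrite -score_i vi0 mul0r ltxx.
Qed.

Lemma rev_at_all_tied (r : vecR R n) (M : R) :
  0 <= M -> (forall j, v j * r j = M) -> rev_at v r r = M.
Proof.
move=> M_ge0 score.
have n_gt0 : (0 < n)%N by exact: ltnW.
have top_M : top_score v r = M.
  apply/le_anti/andP; split; first by apply: bigmax_le => // j _; rewrite score.
  by have := le_bigmax 0 (fun j => v j * r j) (Ordinal n_gt0); rewrite score.
have all_win : winners v r = [set: 'I_n] by apply/setP => j; rewrite !inE score top_M eqxx.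
rewrite /rev_at all_win cardsT card_ord (eq_bigr (fun _ => M)).
  by rewrite sumr_const cardsT card_ord -[_ *+ _]mulr_natr; field; rewrite pnatr_eq0 -lt0n.
move=> i _; rewrite /price; have [ri0|ri_neq0] := eqVneq (r i) 0.
  by have := score i; rewrite ri0 mulr0 mul0r.
by rewrite (max_others_const (c := M)) // mulrC divfK.
Qed.

End AuctionOutcomes.

Section Triangular.
Local Open Scope nat_scope.

Lemma sum_triangular (K : nat) : (\sum_(1 <= k < K.+1) (K.+1 - k)).*2 = K * K.+1.
Proof.
rewrite big_nat_rev.
have -> : \sum_(1 <= i < K.+1) (K.+1 - (1 + K.+1 - i.+1)) = \sum_(1 <= i < K.+1) i.
  by apply: eq_big_nat => k /andP[_ k_le]; rewrite add1n subSS subKn // ltnW.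
have -> : \sum_(1 <= i < K.+1) i = 'C(K.+1, 2) by rewrite -bin2_sum [RHS]big_ltn.
by rewrite bin2 even_halfK mulnC // oddM oddS /=; case: (odd K).
Qed.

End Triangular.

Section Weights.
Variables (R : realType) (K : nat).

Definition tri (k : nat) : nat := if k is 0 then 0 else K.+1 - k.

Definition weight (k : nat) : R := (tri k)%:R * (2 / (K * K.+1)%:R).

Lemma weight_norm_ge0 : 0 <= 2 / (K * K.+1)%:R :> R.
Proof. by rewrite divr_ge0 ?ler0n. Qed.

Lemma weight_ge0 k : 0 <= weight k.
Proof. by rewrite mulr_ge0 ?ler0n ?weight_norm_ge0. Qed.

Lemma weight_out k : ~~ (0 < k <= K)%N -> weight k = 0.
Proof.
rewrite /weight /tri; case: k => [|k]; rewrite ?mul0r //= -ltnNge => K_lt.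
by move: K_lt; rewrite subSS ltnS -subn_eq0 => /eqP ->; rewrite mul0r.
Qed.

Lemma weight_gt0 k : (0 < k <= K)%N -> 0 < weight k.
Proof.
case: k => [//|k] /= k_le; rewrite mulr_gt0 ?ltr0n ?subn_gt0 //.
by rewrite divr_gt0 // ltr0n muln_gt0; apply/andP; split => //; exact: leq_ltn_trans k_le.
Qed.

Lemma sum_weight : (0 < K)%N -> \sum_(1 <= k < K.+1) weight k = 1.
Proof.
move=> K_gt0; rewrite -mulr_suml -natr_sum (eq_big_nat _ _ (F2 := fun k => K.+1 - k)%N).
  rewrite mulrA -natrM muln2 sum_triangular divff // pnatr_eq0 muln_eq0 negb_or.
  by rewrite -lt0n K_gt0.
by move=> [|k].
Qed.

Lemma weight_first : (0 < K)%N -> weight 1 = 2 / K.+1%:R.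
Proof.
move=> K_gt0; rewrite /weight /= subSS subn0 natrM.
by field; rewrite addrC natr1 !pnatr_eq0 /= -lt0n.
Qed.

Lemma weight_antitone k l : (0 < k <= l)%N -> weight l <= weight k.
Proof.
case: k => [//|k] /= k_le; apply: ler_wpM2r; first exact: weight_norm_ge0.
by rewrite ler_nat; case: l k_le => [//|l] /= k_le; rewrite leq_sub2l.
Qed.

(* Strict log-concavity a_{l-1} a_{l+1} < a_l^2 on the levels 1..K; the
   boundary levels 0 and K+1 carry no weight. *)
Lemma weight_logconcave l : (0 < l <= K)%N ->
  weight l.-1 * weight l.+1 < weight l * weight l.
Proof.
move=> l_range; have norm_gt0 : 0 < 2 / (K * K.+1)%:R :> R.
  case/andP: l_range => l_gt0 l_le; rewrite divr_gt0 // ltr0n muln_gt0.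
  by rewrite (leq_trans l_gt0 l_le).
rewrite /weight mulrACA [X in _ < X]mulrACA (ltr_pM2r (mulr_gt0 norm_gt0 norm_gt0)) -!natrM ltr_nat.
by case: l l_range => [//|[|l]] /andP[_ l_le] /=; nia.
Qed.

End Weights.

Section LabelScores.
Variables (R : realType) (K n : nat) (S mu : R).
Local Notation a := (weight R K).

(* The score v_j s_j of a bidder whose label is l in the construction, for a
   symmetric environment with surplus S, mean score mu and n bidders: label l
   arises from level l-1 as designated winner (probability 1/n) or from level
   l otherwise, and the signal is the conditional mean click-through rate. *)
Definition label_score (l : nat) : R :=
  (a l.-1 * S + a l * (n%:R * mu - S)) / (a l.-1 + a l * (n%:R - 1)).

(* Revenue of the construction as a fraction of the surplus: at level k the
   winner, labelled k+1, pays the competitors' score, labelled k. *)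
Definition revenue_share : R :=
  \sum_(1 <= k < K.+1) a k * (label_score k / label_score k.+1).

Local Notation m := label_score.

Hypotheses (n_gt1 : (1 < n)%N) (K_gt0 : (0 < K)%N).
Hypotheses (mu_lt_S : mu < S) (S_le_sum : S <= n%:R * mu).

(* Since (n-1) mu >= S - mu > 0, the mean score is positive. *)
Lemma mean_score_gt0 : 0 < mu.
Proof.
have : 0 < mu * (n%:R - 1).
  by rewrite mulrBr mulr1 mulrC subr_gt0 (lt_le_trans mu_lt_S).
by rewrite pmulr_lgt0 // subr_gt0 ltr1n.
Qed.

Let den_ge0 l : 0 <= a l.-1 + a l * (n%:R - 1).
Proof.
apply: addr_ge0; first exact: weight_ge0.
by rewrite mulr_ge0 ?weight_ge0 // subr_ge0 ler1n ltnW.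
Qed.

Let num_ge0 l : 0 <= a l.-1 * S + a l * (n%:R * mu - S).
Proof.
have S_ge0 : 0 <= S := ltW (lt_trans mean_score_gt0 mu_lt_S).
apply: addr_ge0; first by rewrite mulr_ge0 ?weight_ge0.
by rewrite mulr_ge0 ?weight_ge0 // subr_ge0.
Qed.

Lemma label_score_ge0 l : 0 <= label_score l.
Proof. exact: divr_ge0. Qed.

Lemma label_score_den_gt0 l : (0 < l <= K.+1)%N -> 0 < a l.-1 + a l * (n%:R - 1).
Proof.
case: l => [//|[|l]] /= l_le.
  rewrite weight_out // add0r mulr_gt0 ?weight_gt0 ?K_gt0 //.
  by rewrite subr_gt0 ltr1n.
by rewrite ltr_pwDl ?weight_gt0 // mulr_ge0 ?weight_ge0 // subr_ge0 ler1n ltnW.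
Qed.

(* The top label is held only by designated winners at the top level. *)
Lemma label_score_last : label_score K.+1 = S.
Proof.
rewrite /label_score /= (weight_out _ (_ : ~~ (0 < K.+1 <= K)%N)) ?ltnn ?andbF //.
rewrite !mul0r !addr0 mulrAC divff ?mul1r //.
by apply: lt0r_neq0; apply: weight_gt0; rewrite K_gt0 leqnn.
Qed.

(* Log-concavity of the weights makes scores strictly increase with the label. *)
Lemma label_score_incr l : (0 < l <= K)%N -> label_score l < label_score l.+1.
Proof.
move=> l_range.
have den_l : 0 < a l.-1 + a l * (n%:R - 1) by apply: label_score_den_gt0; lia.
have den_l1 : 0 < a l.+1.-1 + a l.+1 * (n%:R - 1) by apply: label_score_den_gt0; lia.
rewrite /label_score ltr_pdivrMr // [X in _ < X]mulrAC ltr_pdivlMr // -subr_gt0 /=.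
set a0 := a l.-1; set a1 := a l; set a2 := a l.+1.
have -> : (a1 * S + a2 * (n%:R * mu - S)) * (a0 + a1 * (n%:R - 1)) -
    (a0 * S + a1 * (n%:R * mu - S)) * (a1 + a2 * (n%:R - 1)) =
    (a1 * a1 - a0 * a2) * (n%:R * (S - mu)) by ring.
apply: mulr_gt0; first by rewrite subr_gt0 weight_logconcave.
by rewrite mulr_gt0 ?subr_gt0 // ltr0n ltnW.
Qed.

(* Scores of labels at least 2 dominate the mean score, since the weights
   decrease. *)
Lemma label_score_ge_mean l : (1 < l <= K.+1)%N -> mu <= label_score l.
Proof.
move=> l_range.
have den : 0 < a l.-1 + a l * (n%:R - 1) by apply: label_score_den_gt0; lia.
rewrite /label_score ler_pdivlMr // -subr_ge0.
have -> : a l.-1 * S + a l * (n%:R * mu - S) - mu * (a l.-1 + a l * (n%:R - 1)) =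
  (a l.-1 - a l) * (S - mu) by ring.
apply: mulr_ge0; last by rewrite subr_ge0 ltW.
by rewrite subr_ge0 weight_antitone //; lia.
Qed.

(* The relative revenue loss: 1 - revenue_share = sum_k a_k (1 - m_k / m_{k+1})
   is at most a_1 (m_{K+1} - m_1) / mu by telescoping, and a_1 = 2/(K+1). *)
Lemma revenue_share_gap : S - S * revenue_share <= 2 * S ^+ 2 / mu / K.+1%:R.
Proof.
have mu_gt0 := mean_score_gt0.
have S_ge0 : 0 <= S := ltW (lt_trans mu_gt0 mu_lt_S).
have m_next_gt0 k : (0 < k <= K)%N -> 0 < m k.+1.
  move=> /andP[k_gt0 k_le]; apply: lt_le_trans (label_score_ge_mean _) => //.
  by rewrite ltnS k_gt0.
have loss : 1 - revenue_share = \sum_(1 <= k < K.+1) a k * ((m k.+1 - m k) / m k.+1).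
  rewrite -(sum_weight R K_gt0) -sumrB; apply: eq_big_nat => k k_range.
  by field; apply: lt0r_neq0; exact: m_next_gt0.
have loss_le : \sum_(1 <= k < K.+1) a k * ((m k.+1 - m k) / m k.+1) <= a 1 / mu * S.
  apply: (@le_trans _ _ (\sum_(1 <= k < K.+1) a 1 / mu * (m k.+1 - m k))).
    apply: ler_sum_nat => k k_range; have m_gt0 := m_next_gt0 k k_range.
    have step_ge0 : 0 <= m k.+1 - m k by rewrite subr_ge0 ltW // label_score_incr.
    have -> : a 1 / mu * (m k.+1 - m k) = a 1 * ((m k.+1 - m k) / mu) by ring.
    apply: ler_pM => //.
    + exact: weight_ge0.
    + by rewrite divr_ge0 // ltW.
    + by apply: weight_antitone; lia.
    rewrite ler_pdivrMr // mulrAC ler_pdivlMr // ler_wpM2l //.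
    by apply: label_score_ge_mean; lia.
  rewrite -mulr_sumr telescope_sumr // label_score_last ler_wpM2l //.
    by rewrite divr_ge0 ?weight_ge0 // ltW.
  by rewrite lerBlDr lerDl label_score_ge0.
have bound : S * (a 1 / mu * S) = 2 * S ^+ 2 / mu / K.+1%:R.
  by rewrite (weight_first R K_gt0); ring.
by rewrite -[X in X - _]mulr1 -mulrBr loss -bound ler_wpM2l.
Qed.

End LabelScores.

(* Expected average score E[(1/n) sum_j v_j r_j]; in a symmetric environment
   it is the expected score of every single bidder. *)
Definition mean_score (R : realType) n (v : 'I_n -> R) (G : prior R n) : R :=
  \sum_(p <- G) p.2 * (\sum_j v j * p.1 j) / n%:R.

Section Symmetry.
Variables (R : realType) (n : nat) (v : 'I_n -> R) (G : prior R n).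
Hypothesis symG : symmetric_env v G.

Lemma expectation_perm (F : vecR R n -> R) (s : {perm 'I_n}) :
  \sum_(p <- G) p.2 * F (scores v p.1) = \sum_(p <- G) p.2 * F (permv s (scores v p.1)).
Proof.
pose U := undup ([seq scores v p.1 | p <- G] ++ [seq permv s (scores v p.1) | p <- G]).
have in_U : {in G, forall p, scores v p.1 \in U}.
  by move=> p pG; rewrite mem_undup mem_cat (map_f (fun p : vecR R n * R => scores v p.1) pG).
have perm_in_U : {in G, forall p, permv s (scores v p.1) \in U}.
  move=> p pG; rewrite mem_undup mem_cat.
  by rewrite (map_f (fun p : vecR R n * R => permv s (scores v p.1)) pG) orbT.
rewrite (sum_pushforward _ _ (undup_uniq _) in_U).
rewrite (sum_pushforward _ _ (undup_uniq _) perm_in_U).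
apply: eq_bigr => u _; rewrite (symG s u); congr (_ * _); apply: eq_bigl => p.
by congr (_ == u); apply/ffunP => i; rewrite !ffunE.
Qed.

Lemma expectation_same_for_all (F : 'I_n -> vecR R n -> R) :
  (forall (s : {perm 'I_n}) j u, F j (permv s u) = F (s j) u) ->
  forall j j', \sum_(p <- G) p.2 * F j (scores v p.1) = \sum_(p <- G) p.2 * F j' (scores v p.1).
Proof.
move=> F_perm j j'; rewrite (expectation_perm _ (tperm j j')).
by apply: eq_bigr => p _; rewrite F_perm tpermL.
Qed.

End Symmetry.

Lemma const_eq_average (R : realType) n (f : 'I_n -> R) (j : 'I_n) :
  (forall i i', f i = f i') -> f j = (\sum_i f i) / n%:R.
Proof.
move=> f_const; have n_gt0 : (0 < n)%N by case: n j {f f_const} => [[]|].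
rewrite (eq_bigr (fun _ => f j)) => [|i _]; last exact: f_const.
by rewrite sumr_const card_ord -[f j *+ n]mulr_natr mulfK // pnatr_eq0 -lt0n.
Qed.

Section SymmetricStatistics.
Variables (R : realType) (n : nat) (v : 'I_n -> R) (G : prior R n).
Hypotheses (n_gt1 : (1 < n)%N) (v_ge0 : forall i, 0 <= v i).
Hypotheses (G_prior : is_prior G) (symG : symmetric_env v G).

Let n_gt0 : (0 < n)%N. Proof. exact: ltnW. Qed.

Lemma prior_atom p : p \in G -> 0 <= p.2 /\ forall i, 0 <= p.1 i <= 1.
Proof. by move=> pG; have /andP[-> /forallP] := allP G_prior.1 p pG. Qed.

Lemma scores_ge0 p : p \in G -> forall j, 0 <= scores v p.1 j.
Proof.
move=> pG j; have [_ /(_ j) /andP[r_ge0 _]] := prior_atom pG.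
by rewrite ffunE mulr_ge0.
Qed.

Definition win_prob j := \sum_(p <- G) p.2 * tie_share (scores v p.1) j.
Definition win_ctr j := \sum_(p <- G) p.2 * (p.1 j * tie_share (scores v p.1) j).
Definition mean_ctr j := \sum_(p <- G) p.2 * p.1 j.

Lemma win_prob_eq j : win_prob j = n%:R^-1.
Proof.
rewrite (const_eq_average j) => [|i i']; last first.
  by apply: (expectation_same_for_all symG (F := fun j u => tie_share u j)) => s k u;
     rewrite tie_share_perm.
have total : \sum_i win_prob i = 1.
  rewrite /win_prob exchange_big /= -G_prior.2 big_seq [RHS]big_seq.
  apply: eq_bigr => p pG; rewrite -mulr_sumr sum_tie_share ?mulr1 //.
  exact: scores_ge0.
by rewrite total mul1r.
Qed.

Lemma win_ctr_eq j : v j * win_ctr j = surplus v G / n%:R.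
Proof.
have score_form k : v k * win_ctr k =
    \sum_(p <- G) p.2 * (scores v p.1 k * tie_share (scores v p.1) k).
  by rewrite /win_ctr mulr_sumr; apply: eq_bigr => p _; rewrite ffunE; ring.
rewrite (const_eq_average (f := fun k => v k * win_ctr k)) => [|i i']; last first.
  rewrite !score_form; apply: (expectation_same_for_all symG
    (F := fun j u => u j * tie_share u j)) => s k u.
  by rewrite tie_share_perm ffunE.
congr (_ / _); under eq_bigr do rewrite score_form.
rewrite exchange_big /= big_seq [RHS]big_seq; apply: eq_bigr => p pG.
by rewrite -mulr_sumr sum_tie_share_score ?top_scores //; exact: scores_ge0.
Qed.

Lemma mean_ctr_eq j : v j * mean_ctr j = mean_score v G.
Proof.
have score_form k : v k * mean_ctr k = \sum_(p <- G) p.2 * scores v p.1 k.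
  by rewrite /mean_ctr mulr_sumr; apply: eq_bigr => p _; rewrite ffunE; ring.
rewrite (const_eq_average (f := fun k => v k * mean_ctr k)) => [|i i']; last first.
  rewrite !score_form; apply: (expectation_same_for_all symG (F := fun j u => u j)).
  by move=> s k u; rewrite ffunE.
rewrite /mean_score -mulr_suml; congr (_ / _).
under eq_bigr do rewrite score_form.
rewrite exchange_big /=; apply: eq_bigr => p _; rewrite mulr_sumr.
by apply: eq_bigr => i _; rewrite ffunE.
Qed.

Lemma surplus_le_total : surplus v G <= n%:R * mean_score v G.
Proof.
rewrite /surplus /mean_score mulr_sumr big_seq [X in _ <= X]big_seq.
apply: ler_sum => p pG.
have [p_ge0 _] := prior_atom pG.
rewrite mulrCA mulrAC divff ?mulr1 ?pnatr_eq0 -?lt0n // ler_wpM2l //.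
rewrite -top_scores (eq_bigr (fun j => scores v p.1 j)) => [|j _]; last by rewrite ffunE.
exact/top_le_sum/scores_ge0.
Qed.

End SymmetricStatistics.

Lemma sum_level_indicator (R : realType) (f : nat -> R) (m N l : nat) :
  (forall k, ~~ (m <= k < N)%N -> f k = 0) ->
  \sum_(m <= k < N) (k == l)%:R * f k = f l.
Proof.
move=> f_out; have [l_in|l_out] := boolP (m <= l < N)%N.
  rewrite (bigD1_seq l) ?mem_index_iota ?iota_uniq //= eqxx mul1r big1 ?addr0 //.
  by move=> k /negbTE ->; rewrite mul0r.
rewrite big_nat_cond big1 ?f_out // => k /andP[k_in _].
by case: eqP => [k_l|_]; [rewrite -k_l k_in in l_out | rewrite mul0r].
Qed.

Lemma sum_level_indicator_succ (R : realType) (f : nat -> R) (N l : nat) :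
  (forall k, ~~ (0 < k < N)%N -> f k = 0) ->
  \sum_(1 <= k < N) (k.+1 == l)%:R * f k = f l.-1.
Proof.
move=> f_out; case: l => [|l].
  by rewrite big1 ?f_out // => k _; rewrite mul0r.
by under eq_bigr do rewrite eqSS; exact: sum_level_indicator.
Qed.

Section Construction.
Variables (R : realType) (n : nat) (v : 'I_n -> R) (G : prior R n) (K : nat).
Local Notation a := (weight R K).

(* A cell of the construction: a prior atom (r, g(r)), a level k in 1..K
   and a designated top bidder i at r.  Every cell carries the mass
   g(r) a_k / #(top bidders at r). *)
Definition cell := ((vecR R n * R) * nat * 'I_n)%type.
Local Notation atom t := t.1.1 (only parsing).
Local Notation level t := t.1.2 (only parsing).
Local Notation chosen t := t.2 (only parsing).

Definition top_bidders (p : vecR R n * R) : {set 'I_n} := argmaxes (scores v p.1).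

Definition cells : seq cell :=
  flatten [seq flatten [seq [seq ((p, k), i) | i <- enum (top_bidders p)]
                       | k <- index_iota 1 K.+1] | p <- G].

Definition cell_mass (t : cell) : R := (atom t).2 * a (level t) / #|top_bidders (atom t)|%:R.

Definition label (j : 'I_n) (t : cell) : nat := (level t + (chosen t == j))%N.

Definition label_mass (j : 'I_n) (l : nat) : R :=
  \sum_(t <- cells | label j t == l) cell_mass t.
Definition label_moment (j : 'I_n) (l : nat) : R :=
  \sum_(t <- cells | label j t == l) cell_mass t * (atom t).1 j.

Definition signal (t : cell) : vecR R n :=
  [ffun j => label_moment j (label j t) / label_mass j (label j t)].

Definition design : infostruct R n := [seq (((atom t).1, signal t), cell_mass t) | t <- cells].

Lemma cellsP t : t \in cells ->
  [/\ atom t \in G, (0 < level t <= K)%N & chosen t \in top_bidders (atom t)].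
Proof.
case/flatten_mapP => p pG /flatten_mapP [k k_in] /mapP [i i_top ->].
by rewrite mem_index_iota in k_in; rewrite mem_enum in i_top.
Qed.

Lemma sum_cells (F : cell -> R) : \sum_(t <- cells) F t =
  \sum_(p <- G) \sum_(1 <= k < K.+1) \sum_(i in top_bidders p) F ((p, k), i).
Proof.
rewrite big_flatten big_map; apply: eq_bigr => p _.
rewrite big_flatten big_map; apply: eq_bigr => k _.
by rewrite big_map big_enum.
Qed.

Lemma sum_in_indicator (A : {set 'I_n}) (j : 'I_n) (Y : R) :
  \sum_(i in A) (i == j)%:R * Y = (j \in A)%:R * Y.
Proof.
have [jA|jA] := boolP (j \in A).
  rewrite (bigD1 j) //= eqxx !mul1r big1 ?addr0 // => i /andP[_ /negbTE ->].
  by rewrite mul0r.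
rewrite mul0r big1 // => i iA; case: eqP => [ij|_]; last by rewrite mul0r.
by rewrite -ij iA in jA.
Qed.

Lemma label_mass_atom (p : vecR R n * R) (j : 'I_n) (l : nat) (X : R) :
  (0 < #|top_bidders p|)%N ->
  \sum_(1 <= k < K.+1) \sum_(i in top_bidders p)
     (if label j ((p, k), i) == l then cell_mass ((p, k), i) * X else 0) =
  p.2 * X * (a l.-1 * tie_share (scores v p.1) j + a l * (1 - tie_share (scores v p.1) j)).
Proof.
move=> top_gt0; have top_neq0 : (#|top_bidders p|%:R : R) != 0 by rewrite pnatr_eq0 -lt0n.
set w := tie_share _ j; pose c k := p.2 * a k * X.
have level_sum k : \sum_(i in top_bidders p)
     (if label j ((p, k), i) == l then cell_mass ((p, k), i) * X else 0) =
   (k == l)%:R * c k + w * ((k.+1 == l)%:R * c k - (k == l)%:R * c k).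
  rewrite (eq_bigr (fun i => (k == l)%:R * (c k / #|top_bidders p|%:R) +
      (i == j)%:R * (((k.+1 == l)%:R - (k == l)%:R) * (c k / #|top_bidders p|%:R)))).
    rewrite big_split /= sum_in_indicator sumr_const -[_ *+ _]mulr_natr /w /tie_share.
    by case: (j \in top_bidders p) => /=; field; exact: top_neq0.
  move=> i _; rewrite /label /cell_mass /c /=.
  case: (i == j); rewrite ?addn0 ?addn1; case: (k.+1 == l); case: (k == l) => /=;
    field; exact: top_neq0.
have c_out : forall k, ~~ (0 < k < K.+1)%N -> c k = 0.
  by move=> k k_out; rewrite /c weight_out ?mulr0 ?mul0r.
under eq_bigr do rewrite level_sum.
rewrite big_split /= sum_level_indicator // -mulr_sumr.
rewrite sumrB sum_level_indicator_succ // sum_level_indicator // /c; ring.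
Qed.

Hypotheses (n_gt1 : (1 < n)%N) (v_ge0 : forall i, 0 <= v i) (G_prior : is_prior G).

Lemma top_bidders_gt0 p : p \in G -> (0 < #|top_bidders p|)%N.
Proof. by move=> pG; exact: argmaxes_gt0 (scores_ge0 v_ge0 G_prior pG) (ltnW n_gt1). Qed.

Lemma cell_mass_ge0 t : t \in cells -> 0 <= cell_mass t.
Proof.
case/cellsP => pG _ _; have [p_ge0 _] := prior_atom G_prior pG.
by rewrite /cell_mass mulr_ge0 ?mulr_ge0 ?weight_ge0 ?invr_ge0 ?ler0n.
Qed.

Lemma label_sum (X : vecR R n * R -> R) j l :
  \sum_(t <- cells | label j t == l) cell_mass t * X (atom t) =
  \sum_(p <- G) p.2 * X p *
    (a l.-1 * tie_share (scores v p.1) j + a l * (1 - tie_share (scores v p.1) j)).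
Proof.
rewrite big_mkcond sum_cells big_seq [RHS]big_seq; apply: eq_bigr => p pG.
by rewrite -label_mass_atom //; exact: top_bidders_gt0.
Qed.

Lemma label_mass_eq j l : label_mass j l = a l.-1 * win_prob v G j + a l * (1 - win_prob v G j).
Proof.
rewrite /label_mass; have := label_sum (fun _ => 1) j l; under eq_bigr do rewrite mulr1.
move=> ->; rewrite /win_prob -[in RHS]G_prior.2 !mulr_sumr -sumrB mulr_sumr -big_split /=.
by apply: eq_bigr => p _; ring.
Qed.

Lemma label_moment_eq j l :
  label_moment j l = a l.-1 * win_ctr v G j + a l * (mean_ctr G j - win_ctr v G j).
Proof.
rewrite /label_moment (label_sum (fun p => p.1 j)) /win_ctr /mean_ctr.
rewrite !mulr_sumr -sumrB mulr_sumr -big_split /=.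
by apply: eq_bigr => p _; ring.
Qed.

Lemma cell_ctr_in01 t j : t \in cells -> 0 <= (atom t).1 j <= 1.
Proof. by case/cellsP => /(prior_atom G_prior) [_ /(_ j)]. Qed.

Lemma label_moment_bounds j l : 0 <= label_moment j l <= label_mass j l.
Proof.
apply/andP; split.
  rewrite /label_moment big_seq_cond sumr_ge0 // => t /andP[t_cells _].
  by rewrite mulr_ge0 ?cell_mass_ge0 //; case/andP: (cell_ctr_in01 j t_cells).
rewrite /label_moment /label_mass big_seq_cond [X in _ <= X]big_seq_cond.
apply: ler_sum => t /andP[t_cells _]; rewrite ler_piMr ?cell_mass_ge0 //.
by case/andP: (cell_ctr_in01 j t_cells).
Qed.

Lemma signal_in01 t j : 0 <= signal t j <= 1.
Proof.
rewrite ffunE; have /andP[moment_ge0 moment_le] := label_moment_bounds j (label j t).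
have mass_ge0 := le_trans moment_ge0 moment_le.
rewrite divr_ge0 //=; have [->|mass_neq0] := eqVneq (label_mass j (label j t)) 0.
  by rewrite invr0 mulr0.
by rewrite ler_pdivrMr ?mul1r // lt_def mass_neq0.
Qed.

(* The design is an information structure for G: the cells of an atom split
   its mass g(r), since the level weights sum to one. *)
Lemma design_structure : (0 < K)%N -> is_info_structure G design.
Proof.
move=> K_gt0; split.
  apply/allP => q /mapP [t t_cells ->] /=.
  have [/(prior_atom G_prior) [_ r01] _ _] := cellsP t_cells.
  rewrite cell_mass_ge0 //=; apply/andP; split; apply/forallP => j.
    exact: r01.
  exact: signal_in01.
move=> r; rewrite big_map /= big_mkcond sum_cells /gmass [RHS]big_mkcond.
rewrite big_seq [RHS]big_seq; apply: eq_bigr => p pG /=.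
have top_neq0 : (#|top_bidders p|%:R : R) != 0 by rewrite pnatr_eq0 -lt0n top_bidders_gt0.
case: (p.1 == r); last by rewrite big1 // => k _; rewrite big1.
rewrite (eq_bigr (fun k => p.2 * a k)) => [|k _]; last first.
  by rewrite /cell_mass /= sumr_const -mulr_natr; field.
by rewrite -mulr_sumr sum_weight // mulr1.
Qed.

(* Signals are calibrated: each one is a conditional mean given a label. *)
Lemma design_calibrated : calibrated design.
Proof.
move=> j c; rewrite !big_map /=.
under eq_bigl do rewrite ffunE.
under [X in X / _]eq_bigl do rewrite ffunE.
move=> mass_gt0.
rewrite (@mean_signal_calibrated _ _ _ cells cell_mass (fun t => (atom t).1 j) (label j)).
  by rewrite mulfK // lt0r_neq0.
move=> l mass0; have /andP[moment_ge0 moment_le] := label_moment_bounds j l.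
by apply/le_anti; rewrite moment_ge0 andbT; rewrite /label_mass mass0 in moment_le.
Qed.

Hypothesis symG : symmetric_env v G.
Local Notation S := (surplus v G).
Local Notation mu := (mean_score v G).

Lemma signal_score t j : v j * signal t j = label_score K n S mu (label j t).
Proof.
set l := label j t.
have n_neq0 : (n%:R : R) != 0 by rewrite pnatr_eq0 -lt0n ltnW.
have moment : v j * label_moment j l = (a l.-1 * S + a l * (n%:R * mu - S)) / n%:R.
  rewrite label_moment_eq.
  have -> : v j * (a l.-1 * win_ctr v G j + a l * (mean_ctr G j - win_ctr v G j)) =
      a l.-1 * (v j * win_ctr v G j) + a l * (v j * mean_ctr G j - v j * win_ctr v G j).
    by ring.
  by rewrite win_ctr_eq // mean_ctr_eq //; field.
have mass : label_mass j l = (a l.-1 + a l * (n%:R - 1)) / n%:R.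
  by rewrite label_mass_eq win_prob_eq //; field.
by rewrite ffunE mulrA moment mass /label_score invf_div mulrA divfK.
Qed.

Hypotheses (mu_lt_S : mu < S) (K_gt0 : (0 < K)%N).
Let S_le_total : S <= n%:R * mu. Proof. exact: surplus_le_total. Qed.

(* In a cell of level k the designated winner has label k+1 and all others
   label k, so he wins alone and pays the second price. *)
Lemma rev_at_cell p k i : p \in G -> (0 < k <= K)%N -> i \in top_bidders p ->
  rev_at v p.1 (signal ((p, k), i)) =
  top (scores v p.1) * (label_score K n S mu k / label_score K n S mu k.+1).
Proof.
move=> pG k_range i_top.
rewrite (@rev_at_unique_winner _ _ v n_gt1 _ _ i (label_score K n S mu k)
  (label_score K n S mu k.+1)).
- by move: i_top; rewrite inE ffunE => /eqP ->; rewrite mulrA.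
- exact: label_score_ge0 n_gt1 mu_lt_S S_le_total k.
- by apply: label_score_incr.
- move=> j; rewrite signal_score /label /= eq_sym.
  by case: (j == i); rewrite ?addn0 ?addn1.
Qed.

Lemma design_revenue : revenue v design = S * revenue_share K n S mu.
Proof.
rewrite /revenue big_map /= sum_cells {1}/surplus mulr_suml big_seq [RHS]big_seq.
apply: eq_bigr => p pG; rewrite -top_scores /revenue_share !mulr_sumr.
have top_neq0 : (#|top_bidders p|%:R : R) != 0 by rewrite pnatr_eq0 -lt0n top_bidders_gt0.
apply: eq_big_nat => k k_range.
rewrite (eq_bigr (fun i => cell_mass ((p, k), i) * (top (scores v p.1) *
    (label_score K n S mu k / label_score K n S mu k.+1)))) => [|i i_top]; last first.
  by rewrite rev_at_cell.
rewrite /cell_mass /= sumr_const -mulr_natr; field.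
rewrite top_neq0 andbT lt0r_neq0 // (@lt_le_trans _ _ mu) //.
  exact: mean_score_gt0 n_gt1 mu_lt_S S_le_total.
by apply: label_score_ge_mean; lia.
Qed.

End Construction.

Definition full_info (R : realType) n (G : prior R n) : infostruct R n :=
  [seq ((p.1, p.1), p.2) | p <- G].

Section FullInformation.
Variables (R : realType) (n : nat) (v : 'I_n -> R) (G : prior R n).
Hypotheses (n_gt1 : (1 < n)%N) (G_prior : is_prior G) (symG : symmetric_env v G).

Lemma full_info_structure : is_info_structure G (full_info G).
Proof.
split; last by move=> r; rewrite big_map.
apply/allP => q /mapP [p pG ->] /=; have [p_ge0 r01] := prior_atom G_prior pG.
by apply/and3P; split => //; apply/forallP.
Qed.

Lemma full_info_calibrated : calibrated (full_info G).
Proof.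
move=> j c; rewrite !big_map /= => mass_gt0.
rewrite (eq_bigr (fun p => p.2 * c)) => [|p /eqP -> //].
by rewrite -mulr_suml mulrC mulKf // lt0r_neq0.
Qed.

(* If the surplus does not exceed the mean score, then on every atom of
   positive mass all bidders have the top score: E[max - v_j r_j] = 0 by
   symmetry, and the integrand is nonnegative. *)
Lemma degenerate_scores_tied p j : surplus v G <= mean_score v G ->
  p \in G -> p.2 != 0 -> v j * p.1 j = top (scores v p.1).
Proof.
move=> degenerate pG p_neq0.
have gap_ge0 q : q \in G -> 0 <= q.2 * (top (scores v q.1) - scores v q.1 j).
  by move=> qG; case: (prior_atom G_prior qG) => q_ge0 _; rewrite mulr_ge0 // subr_ge0 top_ge.
have gap_sum : \sum_(q <- G | q \in G) q.2 * (top (scores v q.1) - scores v q.1 j) == 0.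
  rewrite eq_le sumr_ge0 // andbT -big_seq.
  under eq_bigr do rewrite mulrBr.
  rewrite sumrB subr_le0.
  have -> : \sum_(q <- G) q.2 * scores v q.1 j = mean_score v G.
    rewrite -(mean_ctr_eq symG j) /mean_ctr mulr_sumr.
    by apply: eq_bigr => q _; rewrite ffunE; ring.
  by under eq_bigr do rewrite top_scores.
move: gap_sum; rewrite psumr_eq0 // => /allP /(_ p pG); rewrite pG /=.
by rewrite mulf_eq0 (negbTE p_neq0) subr_eq0 ffunE => /eqP ->.
Qed.

Lemma full_info_revenue : surplus v G <= mean_score v G ->
  surplus v G <= revenue v (full_info G).
Proof.
move=> degenerate; rewrite /revenue /surplus big_map /= big_seq [X in _ <= X]big_seq.
apply: ler_sum => p pG /=; have [p_ge0 _] := prior_atom G_prior pG.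
have [->|p_neq0] := eqVneq p.2 0; first by rewrite !mul0r.
rewrite (@rev_at_all_tied _ _ v n_gt1 p.1 (top (scores v p.1)) (top_ge0 _)).
  by rewrite top_scores.
by move=> j; exact: degenerate_scores_tied.
Qed.

End FullInformation.

Lemma exists_level_count (R : realType) (c eps : R) : 0 <= c -> 0 < eps ->
  exists K : nat, (0 < K)%N /\ c / K.+1%:R <= eps.
Proof.
move=> c_ge0 eps_gt0; have := archi_boundP (divr_ge0 c_ge0 (ltW eps_gt0)).
set N := Num.Def.archi_bound _ => c_lt; exists N.+1; split => //.
rewrite ler_pdivrMr ?ltr0n // -ler_pdivrMl // mulrC; apply: le_trans (ltW c_lt) _.
by rewrite ler_nat; lia.
Qed.

Unset Implicit Arguments.
Set Strict Implicit.

Theorem mainTheorem3 (R : realType) (n : nat) (v : 'I_n -> R) (G : prior R n) :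
  (2 <= n)%N ->
  (forall i, 0 <= v i) ->
  is_prior G ->
  symmetric_env v G ->
  forall eps : R, 0 < eps ->
  exists x : infostruct R n,
    is_info_structure G x /\ calibrated x /\ surplus v G - eps <= revenue v x.
Proof.
move=> n_gt1 v_ge0 G_prior symG eps eps_gt0.
have [degenerate|mean_lt] := lerP (surplus v G) (mean_score v G).
  exists (full_info G); split; first exact: full_info_structure.
  split; first exact: full_info_calibrated.
  apply: le_trans (full_info_revenue n_gt1 G_prior symG degenerate).
  by rewrite lerBlDr lerDl ltW.
have S_le_total := surplus_le_total n_gt1 v_ge0 G_prior.
have mu_gt0 := mean_score_gt0 n_gt1 mean_lt S_le_total.
have loss_ge0 : 0 <= 2 * surplus v G ^+ 2 / mean_score v G.
  by apply: divr_ge0; [rewrite mulr_ge0 ?sqr_ge0 | exact: ltW].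
have [K [K_gt0 K_fine]] := exists_level_count loss_ge0 eps_gt0.
exists (design v G K); split; first exact: design_structure.
split; first exact: design_calibrated.
rewrite design_revenue //.
have := le_trans (revenue_share_gap n_gt1 K_gt0 mean_lt S_le_total) K_fine.
move: (_ * revenue_share _ _ _ _) => design_rev; lra.
Qed.
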